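(* For all $j_1,j_2\in\tfrac12\mathbb{N}^+$: (i) $\widehat R^{(j_1+\frac12,j_2)}=\mathcal{F}^{(j_1+\frac12)}_{12}\widehat R^{(\frac12,j_2)}_{13}\widehat R^{(j_1,j_2)}_{23}\mathcal{E}^{(j_1+\frac12)}_{12}$; (ii) $\widehat R^{(j_1+\frac12,j_2)}=\mathcal{F}^{(j_1+\frac12)}_{12}\widehat R^{(j_1,j_2)}_{23}\widehat R^{(\frac12,j_2)}_{13}\mathcal{E}^{(j_1+\frac12)}_{12}$; where in (i),(ii) the three tensor factors have sizes $2,\,2j_1+1,\,2j_2+1$; (iii) $\widehat R^{(j_1,j_2+\frac12)}=\mathcal{F}^{(j_2+\frac12)}_{23}\widehat R^{(j_1,\frac12)}_{12}\widehat R^{(j_1,j_2)}_{13}\mathcal{E}^{(j_2+\frac12)}_{23}$; (iv) $\widehat R^{(j_1,j_2+\frac12)}=\mathcal{F}^{(j_2+\frac12)}_{23}\widehat R^{(j_1,j_2)}_{13}\widehat R^{(j_1,\frac12)}_{12}\mathcal{E}^{(j_2+\frac12)}_{23}$; where in (iii),(iv) the three tensor factors have sizes $2j_1+1,\,2,\,2j_2+1$.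
   Context: $\mathbb{F}$ is a field of characteristic zero in which every element has a square root; $q\in\mathbb{F}$ is nonzero and not a root of unity, with a fixed square root $q^{1/2}$ ($q^{k/2}:=(q^{1/2})^k$); other $(\cdot)^{1/2}$ are fixed square roots in $\mathbb{F}$. $[n]_q=\frac{q^n-q^{-n}}{q-q^{-1}}$. $\tfrac12\mathbb{N}^+=\{\tfrac12,1,\tfrac32,\dots\}$. $\otimes$ is the Kronecker product, $I_n$ the identity. Leg notation: for factors $\mathbb{F}^{n_1}\otimes\mathbb{F}^{n_2}\otimes\mathbb{F}^{n_3}$, $X_{12}=X\otimes I_{n_3}$, $X_{23}=I_{n_1}\otimes X$, $X_{13}=P(X\otimes I_{n_2})P$ with $P$ the flip of factors 2,3; for non-square $Y$, $Y_{12}=Y\otimes I_{n_3}$, $Y_{23}=I_{n_1}\otimes Y$. For $j\in\tfrac12\mathbb{N}^+$, $\mathcal{E}^{(j+\frac12)}$ is the $(4j+2)\times(2j+2)$ matrix with only nonzero entries $\mathcal{E}_{(a,a)}=\big(\frac{[2j+2-a]_q}{[2j+1]_q}\big)^{1/2}$, $\mathcal{E}_{(a+2j+1,a+1)}=\big(\frac{[a]_q}{[2j+1]_q}\big)^{1/2}$ ($1\le a\le 2j+1$), and $\mathcal{F}^{(j+\frac12)}$ is the $(2j+2)\times(4j+2)$ matrix with only nonzero entries $\mathcal{F}_{(a,a)}=\frac{([2j+2-a]_q[2j+1]_q)^{1/2}}{[2j+2-a]_q+[a-1]_q}$, $\mathcal{F}_{(a+1,a+2j+1)}=\frac{([a]_q[2j+1]_q)^{1/2}}{[2j+1-a]_q+[a]_q}$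 ($1\le a\le 2j+1$); the $4j+2$ side is $\mathbb{F}^2\otimes\mathbb{F}^{2j+1}$. For $j_1,j_2\in\tfrac12\mathbb{N}^+$, $\widehat R^{(j_1,j_2)}=q^{2\,\mathrm{diag}(j_1,j_1-1,\dots,-j_1)\otimes\mathrm{diag}(j_2,j_2-1,\dots,-j_2)}$, the $(2j_1+1)(2j_2+1)$-square diagonal matrix with entries $q^{2\alpha\beta}$. *)

(* Kronecker product: [tensmx] ( A *t B ) from
   mathcomp-real-closed's mxtens, with (A *t B) (i*p+k) (j*q+l) = A i j * B k l. *)
From HB Require Import structures.
From mathcomp Require Import all_boot all_order all_algebra.
From mathcomp Require Import mxtens.
Set Implicit Arguments. Unset Strict Implicit. Unset Printing Implicit Defensive.
Import Order.TTheory GRing.Theory Num.Theory.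
Local Open Scope ring_scope.

Section Defs.
Variable F : fieldType.

Definition qnum (q : F) (n : nat) : F := (q ^+ n - q ^- n) / (q - q^-1).

(* index entry test, 1-based: (i,k) is position (a,b) *)
Definition at1 {m n} (i : 'I_m) (k : 'I_n) (a b : nat) : bool :=
  ((i : nat) == a.-1) && ((k : nat) == b.-1).

(* Rhat^(j1,j2) with 2 j1 = m1, 2 j2 = m2: diagonal matrix of size
   (m1+1)(m2+1) with entries q^(2 alpha beta) = (q^(1/2))^(4 alpha beta),
   alpha = j1 - i1, beta = j2 - i2, i.e. 4 alpha beta = (m1 - 2 i1)(m2 - 2 i2). *)
Definition Rhat (qh : F) (m1 m2 : nat) : 'M[F]_(m1.+1 * m2.+1) :=
  \matrix_(i, k)
    if i == k then
      qh ^ ((m1%:Z - (2 * (mxtens_unindex i).1)%N%:Z)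
            * (m2%:Z - (2 * (mxtens_unindex i).2)%N%:Z))
    else 0.

(* E^(j+1/2) with 2j = n: a (4j+2) x (2j+2) matrix.  rt k is the fixed
   square root of [k]_q; ([x]/[y])^(1/2) := rt x / rt y. *)
Definition Emx (q : F) (rt : nat -> F) (n : nat) : 'M[F]_(2 * n.+1, n.+2) :=
  \matrix_(i, k) \sum_(1 <= a < n.+2)
     ((at1 i k a a)%:R * (rt (n.+2 - a)%N / rt n.+1)
      + (at1 i k (a + n.+1)%N a.+1)%:R * (rt a / rt n.+1)).

(* F^(j+1/2) with 2j = n: a (2j+2) x (4j+2) matrix;
   ([x][y])^(1/2) := rt x * rt y. *)
Definition Fmx (q : F) (rt : nat -> F) (n : nat) : 'M[F]_(n.+2, 2 * n.+1) :=
  \matrix_(i, k) \sum_(1 <= a < n.+2)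
     ((at1 i k a a)%:R
        * (rt (n.+2 - a)%N * rt n.+1 / (qnum q (n.+2 - a)%N + qnum q (a - 1)%N))
      + (at1 i k a.+1 (a + n.+1)%N)%:R
        * (rt a * rt n.+1 / (qnum q (n.+1 - a)%N + qnum q a))).

(* Leg notation on F^d1 (x) F^d2 (x) F^d3 (indices associated as (d1*d2)*d3). *)
Definition leg12 (d3 : nat) {m n} (X : 'M[F]_(m, n)) : 'M[F]_(m * d3, n * d3) :=
  X *t (1%:M : 'M[F]_d3).

Definition leg23 (d1 : nat) {d2 d3} (X : 'M[F]_(d2 * d3)) : 'M[F]_(d1 * d2 * d3) :=
  castmx (mulnA d1 d2 d3, mulnA d1 d2 d3) ((1%:M : 'M[F]_d1) *t X).

Definition leg23E (d1 : nat) {c2 c3 m} (Y : 'M[F]_(c2 * c3, m))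
  : 'M[F]_(d1 * c2 * c3, d1 * m) :=
  castmx (mulnA d1 c2 c3, erefl) ((1%:M : 'M[F]_d1) *t Y).

Definition leg23F (d1 : nat) {m c2 c3} (Y : 'M[F]_(m, c2 * c3))
  : 'M[F]_(d1 * m, d1 * c2 * c3) :=
  castmx (erefl, mulnA d1 c2 c3) ((1%:M : 'M[F]_d1) *t Y).

Definition flip23 (d1 d2 d3 : nat) : 'M[F]_(d1 * d2 * d3, d1 * d3 * d2) :=
  \matrix_(u, v)
    (let: (ab, c) := mxtens_unindex u in
     let: (a, b) := mxtens_unindex ab in
     let: (ac, b') := mxtens_unindex v in
     let: (a', c') := mxtens_unindex ac in
     [&& a == a', b == b' & c == c'])%:R.

Definition leg13 (d2 : nat) {d1 d3} (X : 'M[F]_(d1 * d3)) : 'M[F]_(d1 * d2 * d3) :=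
  flip23 d1 d2 d3 *m (X *t (1%:M : 'M[F]_d2)) *m flip23 d1 d3 d2.

End Defs.

From HB Require Import structures.
From mathcomp Require Import all_boot all_order all_algebra.
From mathcomp Require Import mxtens.
From mathcomp Require Import zify ring.
Set Implicit Arguments. Unset Strict Implicit. Unset Printing Implicit Defensive.
Import Order.TTheory GRing.Theory Num.Theory.
Local Open Scope ring_scope.

(* The embedding E = E^(j+1/2) sends the basis vector e_k of the spin-(j+1/2)
   module into the span of the e_s (x) e_b with s + b = k, so it preserves
   J_z-weights (weights add under the tensor product).  Every R-hat is
   q^(2 J_z (x) J_z), a diagonal matrix whose entries depend only on weights;
   hence R_13 R_23 E_12 = E_12 R-hat, both sides being
   q^(2 (weight e_s + weight e_b) weight e_c) = q^(2 weight e_k weight e_c) at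
   every nonzero entry of E_12.  Moreover F is a left inverse of E: the k-th
   diagonal entry of F E is ([2j+1-k]_q + [k]_q) / ([2j+1-k]_q + [k]_q), and the
   denominator is nonzero because q is not a root of unity.  So
   F_12 R_13 R_23 E_12 = F_12 E_12 R-hat = R-hat, and the two diagonal factors
   commute.  Fusing the second factor instead gives (iii) and (iv). *)

Section MatrixFacts.
Variable R : comNzRingType.

Lemma sum_indicator (I : finType) (x : I) (g : I -> R) :
  \sum_i (i == x)%:R * g i = g x.
Proof.
by rewrite (bigD1 x) //= eqxx mul1r big1 ?addr0 // => i /negbTE->; rewrite mul0r.
Qed.

Lemma sum_nat_indicator (m n i : nat) (g : nat -> R) :
  \sum_(m <= a < n) (a == i)%:R * g a = if (m <= i < n)%N then g i else 0.
Proof.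
by rewrite -(big_nat1_eq +%R g) big_mkcond; apply: eq_bigr => a _; rewrite mulr_natl mulrb.
Qed.

Lemma sum_mxtens_index m1 m2 (G : 'I_(m1 * m2) -> R) :
  \sum_u G u = \sum_s \sum_t G (mxtens_index (s, t)).
Proof.
rewrite pair_bigA; apply: reindex.
exists (@mxtens_unindex m1 m2) => u _.
  by rewrite -surjective_pairing mxtens_indexK.
by rewrite -surjective_pairing mxtens_unindexK.
Qed.

Lemma mxtens_index_eq m1 m2 (s s' : 'I_m1) (t t' : 'I_m2) :
  (mxtens_index (s, t) == mxtens_index (s', t')) = (s == s') && (t == t').
Proof. by rewrite (inj_eq (can_inj (@mxtens_indexK m1 m2))) xpair_eqE. Qed.

Lemma tensmx_id m n : (1%:M : 'M[R]_m) *t (1%:M : 'M[R]_n) = 1%:M.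
Proof.
apply/matrixP => u v.
case: (mxtens_indexP u) => s t; case: (mxtens_indexP v) => s' t'.
by rewrite tensmxE !mxE mxtens_index_eq -natrM mulnb.
Qed.

Lemma castmx_mulmx_cancel m n n' p (e : n = n') (A : 'M[R]_(m, n)) (B : 'M_(n, p)) :
  castmx (erefl, e) A *m castmx (e, erefl) B = A *m B.
Proof. by case: n' / e. Qed.

Lemma mulmx_linv_intertwine m n (P : 'M[R]_(n, m)) (E : 'M_(m, n)) X Y :
  P *m E = 1%:M -> X *m E = E *m Y -> P *m X *m E = Y.
Proof. by move=> PE XE; rewrite -mulmxA XE mulmxA PE mul1mx. Qed.

Lemma diag_mx_intertwine m n (A : 'M[R]_(m, n)) (d : 'rV_m) (e : 'rV_n) :
  (forall i j, A i j != 0 -> d 0 i = e 0 j) -> diag_mx d *m A = A *m diag_mx e.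
Proof.
move=> dAe; rewrite mul_diag_mx mul_mx_diag; apply/matrixP => i j; rewrite !mxE.
by have [->|/dAe->] := eqVneq (A i j) 0; rewrite ?mulr0 ?mul0r // mulrC.
Qed.

Lemma mulmx_tens_fiber p m1 m2 (A : 'M[R]_(p, m1 * m2)) (B : 'M_(m1 * m2, p))
    (pi : 'I_m1 -> 'I_m2 -> nat) (a b : 'I_m1 -> 'I_m2 -> R) :
  (forall i s t, A i (mxtens_index (s, t)) = (pi s t == i)%:R * a s t) ->
  (forall s t k, B (mxtens_index (s, t)) k = (pi s t == k)%:R * b s t) ->
  A *m B = diag_mx (\row_i \sum_s \sum_(t | pi s t == i) a s t * b s t).
Proof.
move=> hA hB; apply/matrixP => i k; rewrite !mxE sum_mxtens_index.
have [<-|ne] := eqVneq i k.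
  rewrite mulr1n; apply: eq_bigr => s _; rewrite [RHS]big_mkcond /=.
  by apply: eq_bigr => t _; rewrite hA hB; case: eqP; rewrite ?mul0r // !mul1r.
rewrite mulr0n big1 // => s _; rewrite big1 // => t _; rewrite hA hB.
have [pi_i|_] := eqVneq (pi s t) i; last by rewrite mulr0n !mul0r.
by rewrite pi_i val_eqE (negbTE ne) mul0r mulr0.
Qed.

End MatrixFacts.

Section Legs.
Variable F : fieldType.

Lemma cast_mxtens_index d1 d2 d3 (a : 'I_d1) (b : 'I_d2) (c : 'I_d3) :
  cast_ord (esym (mulnA d1 d2 d3)) (mxtens_index (mxtens_index (a, b), c))
  = mxtens_index (a, mxtens_index (b, c)).
Proof. by apply: val_inj; rewrite /= mulnDl -mulnA addnA. Qed.

Lemma leg12_mxE d3 m n (X : 'M[F]_(m, n)) i k (c c' : 'I_d3) :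
  leg12 d3 X (mxtens_index (i, c)) (mxtens_index (k, c')) = X i k * (c == c')%:R.
Proof. by rewrite tensmxE mxE. Qed.

Lemma leg23_mxE d1 d2 d3 (X : 'M[F]_(d2 * d3)) (a a' : 'I_d1) b b' c c' :
  leg23 d1 X (mxtens_index (mxtens_index (a, b), c))
             (mxtens_index (mxtens_index (a', b'), c'))
  = (a == a')%:R * X (mxtens_index (b, c)) (mxtens_index (b', c')).
Proof. by rewrite castmxE !cast_mxtens_index tensmxE mxE. Qed.

Lemma leg23E_mxE d1 c2 c3 m (Y : 'M[F]_(c2 * c3, m)) (a a' : 'I_d1) b c k :
  leg23E d1 Y (mxtens_index (mxtens_index (a, b), c)) (mxtens_index (a', k))
  = (a == a')%:R * Y (mxtens_index (b, c)) k.
Proof. by rewrite castmxE cast_mxtens_index cast_ord_id tensmxE mxE. Qed.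

Definition flip23_index d1 d2 d3 (u : 'I_(d1 * d2 * d3)) : 'I_(d1 * d3 * d2) :=
  let: (ab, c) := mxtens_unindex u in
  let: (a, b) := mxtens_unindex ab in mxtens_index (mxtens_index (a, c), b).

Lemma flip23_indexE d1 d2 d3 (a : 'I_d1) (b : 'I_d2) (c : 'I_d3) :
  flip23_index (mxtens_index (mxtens_index (a, b), c))
  = mxtens_index (mxtens_index (a, c), b).
Proof. by rewrite /flip23_index !mxtens_indexK. Qed.

Lemma flip23_indexK d1 d2 d3 :
  cancel (@flip23_index d1 d2 d3) (@flip23_index d1 d3 d2).
Proof.
move=> u; case: (mxtens_indexP u) => ab c; case: (mxtens_indexP ab) => a b.
by rewrite !flip23_indexE.
Qed.

Lemma flip23E d1 d2 d3 u v : flip23 F d1 d2 d3 u v = (v == flip23_index u)%:R.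
Proof.
case: (mxtens_indexP u) => ab c; case: (mxtens_indexP ab) => a b.
case: (mxtens_indexP v) => ac b'; case: (mxtens_indexP ac) => a' c'.
rewrite mxE flip23_indexE !mxtens_indexK /= !mxtens_index_eq.
by rewrite (eq_sym a') (eq_sym b') (eq_sym c') andbA andbAC.
Qed.

Lemma leg13_mxE d1 d2 d3 (X : 'M[F]_(d1 * d3)) (a a' : 'I_d1) (b b' : 'I_d2) c c' :
  leg13 d2 X (mxtens_index (mxtens_index (a, b), c))
             (mxtens_index (mxtens_index (a', b'), c'))
  = X (mxtens_index (a, c)) (mxtens_index (a', c')) * (b == b')%:R.
Proof.
set u := mxtens_index _; set w := mxtens_index (mxtens_index (a', b'), c').
rewrite mxE (eq_bigr (fun v => (v == flip23_index w)%:R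
                                * (flip23 F d1 d2 d3 *m (X *t 1%:M)) u v)); last first.
  move=> v _; rewrite flip23E mulrC eq_sym.
  by rewrite (can2_eq (@flip23_indexK _ _ _) (@flip23_indexK _ _ _)).
rewrite sum_indicator mxE (eq_bigr (fun v => (v == flip23_index u)%:R
                                            * (X *t 1%:M) v (flip23_index w))); last first.
  by move=> v _; rewrite flip23E.
by rewrite sum_indicator !flip23_indexE tensmxE mxE.
Qed.

Lemma leg12_diag_mx d1 d2 d3 (e : 'rV[F]_(d1 * d2)) :
  leg12 d3 (diag_mx e) = diag_mx (\row_u e 0 (mxtens_unindex u).1).
Proof.
apply/matrixP => u v.
case: (mxtens_indexP u) => ab c; case: (mxtens_indexP v) => ab' c'.
by rewrite leg12_mxE !mxE mxtens_indexK mxtens_index_eq mulr_natr -mulrnA mulnb.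
Qed.

Lemma leg23_diag_mx d1 d2 d3 (e : 'rV[F]_(d2 * d3)) :
  leg23 d1 (diag_mx e) = diag_mx (\row_u e 0 (mxtens_index
    ((mxtens_unindex (mxtens_unindex u).1).2, (mxtens_unindex u).2))).
Proof.
apply/matrixP => u v.
case: (mxtens_indexP u) => ab c; case: (mxtens_indexP ab) => a b.
case: (mxtens_indexP v) => ab' c'; case: (mxtens_indexP ab') => a' b'.
rewrite leg23_mxE !mxE !mxtens_indexK !mxtens_index_eq /=.
by rewrite mulr_natl -mulrnA mulnb andbC andbA.
Qed.

Lemma leg13_diag_mx d1 d2 d3 (e : 'rV[F]_(d1 * d3)) :
  leg13 d2 (diag_mx e) = diag_mx (\row_u e 0 (mxtens_index
    ((mxtens_unindex (mxtens_unindex u).1).1, (mxtens_unindex u).2))).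
Proof.
apply/matrixP => u v.
case: (mxtens_indexP u) => ab c; case: (mxtens_indexP ab) => a b.
case: (mxtens_indexP v) => ab' c'; case: (mxtens_indexP ab') => a' b'.
rewrite leg13_mxE !mxE !mxtens_indexK !mxtens_index_eq /=.
by rewrite mulr_natr -mulrnA mulnb andbAC.
Qed.

Lemma leg12_linv d3 m n (P : 'M[F]_(n, m)) (E : 'M_(m, n)) :
  P *m E = 1%:M -> leg12 d3 P *m leg12 d3 E = 1%:M.
Proof. by move=> PE; rewrite /leg12 tensmx_mul PE mulmx1 tensmx_id. Qed.

Lemma leg23_linv d1 c2 c3 m (P : 'M[F]_(m, c2 * c3)) (E : 'M_(c2 * c3, m)) :
  P *m E = 1%:M -> leg23F d1 P *m leg23E d1 E = 1%:M.
Proof.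
by move=> PE; rewrite /leg23F /leg23E castmx_mulmx_cancel tensmx_mul PE mulmx1 tensmx_id.
Qed.

End Legs.

Section SpinMatrices.
Variable F : fieldType.

Lemma at1C m n (i : 'I_m) (k : 'I_n) x y : at1 i k x y = at1 k i y x.
Proof. exact: andbC. Qed.

Lemma sum_at1_mxtens n (x y : nat -> F) (s : 'I_2) (b : 'I_n.+1) (k : 'I_n.+2) :
  \sum_(1 <= a < n.+2) ((at1 (mxtens_index (s, b)) k a a)%:R * x a
                        + (at1 (mxtens_index (s, b)) k (a + n.+1) a.+1)%:R * y a)
  = ((s + b)%N == k)%:R * (if s == 0 :> nat then x b.+1 else y b.+1).
Proof.
rewrite (eq_big_nat _ _ (F2 := fun a => (a == b.+1)%:R
   * (((s + b)%N == k)%:R * (if s == 0 :> nat then x a else y a)))); last first.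
  move=> a /andP [a_gt0 a_lt]; have b_lt := ltn_ord b; rewrite /at1 /=.
  case: s => [[|[|//]] /= _].
    rewrite (_ : (_ == (a + n.+1).-1) && _ = false) ?mul0r ?addr0; last by lia.
    by rewrite mulrA -natrM mulnb; congr (_%:R * _); lia.
  rewrite (_ : (_ == a.-1) && _ = false) ?mul0r ?add0r; last by lia.
  by rewrite mulrA -natrM mulnb; congr (_%:R * _); lia.
by rewrite sum_nat_indicator /= ltnS ltn_ord.
Qed.

(* Up to the factor 1 / rt n.+1, [cg rt n s b] is the Clebsch-Gordan
   coefficient of e_s (x) e_b in the image of e_(s+b) under Emx (see EmxE). *)
Definition cg (rt : nat -> F) n (s b : nat) : F :=
  rt (if s == 0%N then n.+1 - b else b.+1)%N.

Definition qden (q : F) n i := qnum q (n.+1 - i) + qnum q i.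

Lemma EmxE q rt n (s : 'I_2) (b : 'I_n.+1) k :
  Emx q rt n (mxtens_index (s, b)) k = ((s + b)%N == k)%:R * (cg rt n s b / rt n.+1).
Proof. by rewrite mxE sum_at1_mxtens subSS /cg; case: ifP. Qed.

Lemma FmxE q rt n k (s : 'I_2) (b : 'I_n.+1) :
  Fmx q rt n k (mxtens_index (s, b))
  = ((s + b)%N == k)%:R * (cg rt n s b * rt n.+1 / qden q n (s + b)).
Proof.
rewrite mxE; under eq_bigr do rewrite !(at1C k).
by rewrite sum_at1_mxtens /cg /qden; case: s => [[|[|//]] ?] /=; rewrite subSS ?subn1.
Qed.

Lemma qnum0 (q : F) : qnum q 0 = 0.
Proof. by rewrite /qnum expr0 invr1 subrr mul0r. Qed.

Lemma Fmx_mulmx_Emx q rt n :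
  (forall k, rt k ^+ 2 = qnum q k) -> (forall i, (i <= n.+1)%N -> qden q n i != 0) ->
  Fmx q rt n *m Emx q rt n = 1%:M.
Proof.
move=> rtE den_neq0.
have rt_neq0 : rt n.+1 != 0.
  apply: contraNneq (den_neq0 0%N isT) => rt0.
  by rewrite /qden subn0 qnum0 addr0 -rtE rt0 expr0n.
rewrite (mulmx_tens_fiber (pi := fun s t => (s + t)%N) (@FmxE q rt n) (@EmxE q rt n)).
rewrite -diag_const_mx; congr diag_mx; apply/rowP => i; rewrite !mxE.
have termE (s : 'I_2) (t : 'I_n.+1) :
    cg rt n s t * rt n.+1 / qden q n (s + t) * (cg rt n s t / rt n.+1)
    = qnum q (if s == 0 :> nat then n.+1 - t else t.+1)%N / qden q n (s + t).
  rewrite /cg -rtE; field; rewrite rt_neq0 den_neq0 //.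
  by have := ltn_ord s; have := ltn_ord t; lia.
rewrite (eq_bigr _ (fun s _ => eq_bigr _ (fun t _ => termE s t))).
have sum1 : \sum_(t < n.+1 | (1 + t)%N == i) qnum q t.+1 / qden q n (1 + t)
            = qnum q i / qden q n i.
  case: i => [[|i] /= i_lt]; first by rewrite big_pred0 // qnum0 mul0r.
  by rewrite (big_ord1_eq _ (fun t => qnum q t.+1 / qden q n t.+1)) -ltnS i_lt.
have sum0 : \sum_(t < n.+1 | (0 + t)%N == i) qnum q (n.+1 - t) / qden q n (0 + t)
            = qnum q (n.+1 - i) / qden q n i.
  rewrite (big_ord1_eq _ (fun t => qnum q (n.+1 - t) / qden q n t)).
  case: ltnP => // i_ge; have -> : (n.+1 - i = 0)%N by have := ltn_ord i; lia.
  by rewrite qnum0 mul0r.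
rewrite big_ord_recl big_ord1 sum0 sum1 -mulrDl divff // den_neq0 // -ltnS.
exact: ltn_ord.
Qed.

Section QNumbers.
Variable q : F.
Hypothesis two_neq0 : 2%:R != 0 :> F.
Hypothesis q_neq0 : q != 0.
Hypothesis q_not_root1 : forall k, (0 < k)%N -> q ^+ k != 1.

Lemma addr_expr_neq0 a b : q ^+ a + q ^+ b != 0.
Proof.
wlog le_ab : a b / (a <= b)%N.
  by move=> W; case: (leqP a b) => [/W//|/ltnW/W]; rewrite addrC.
rewrite -(subnKC le_ab) exprD -[X in X + _]mulr1 -mulrDr mulf_neq0 ?expf_neq0 //.
have [->|ba_gt0] := posnP (b - a); first exact: two_neq0.
have ba2_gt0 : (0 < (b - a) * 2)%N by rewrite muln_gt0 ba_gt0.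
move: (q_not_root1 ba2_gt0); apply: contraNneq => e.
by rewrite exprM -[q ^+ _](addKr 1) e addr0 sqrrN expr1n.
Qed.

Lemma qnum_add_neq0 a b : (0 < a + b)%N -> qnum q a + qnum q b != 0.
Proof.
move=> ab_gt0.
have q2_neq1 : q ^+ 2 - 1 != 0 by rewrite subr_eq0 q_not_root1.
have -> : qnum q a + qnum q b
          = (q ^+ a + q ^+ b) * (1 - (q ^+ (a + b))^-1) * q / (q ^+ 2 - 1).
  by rewrite /qnum exprD; field; rewrite q2_neq1 !expf_neq0.
rewrite !mulf_neq0 ?invr_eq0 ?addr_expr_neq0 // subr_eq0 eq_sym invr_eq1.
exact: q_not_root1.
Qed.

End QNumbers.

(* [weight m i] is twice the J_z-eigenvalue m/2 - i of the i-th basis vector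
   of the spin-m/2 module. *)
Definition weight (m i : nat) : int := m%:Z - (2 * i)%N%:Z.

Lemma weightD m n a b : weight m a + weight n b = weight (m + n) (a + b).
Proof. rewrite /weight; lia. Qed.

Section Fusion.
Variables (qh q : F) (rt : nat -> F).
Hypothesis qh_neq0 : qh != 0.

Lemma Rhat_diag m1 m2 : Rhat qh m1 m2 = diag_mx (\row_u
  qh ^ (weight m1 (mxtens_unindex u).1 * weight m2 (mxtens_unindex u).2)).
Proof. by apply/matrixP => u v; rewrite !mxE; case: eqP. Qed.

Lemma Emx12_intertwines n1 n2 :
  leg13 n1.+1 (Rhat qh 1 n2) *m leg23 2 (Rhat qh n1 n2) *m leg12 n2.+1 (Emx q rt n1)
  = leg12 n2.+1 (Emx q rt n1) *m Rhat qh n1.+1 n2.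
Proof.
rewrite !Rhat_diag leg13_diag_mx leg23_diag_mx mulmx_diag.
apply: diag_mx_intertwine => u v.
case: (mxtens_indexP u) => ab c; case: (mxtens_indexP ab) => a b.
case: (mxtens_indexP v) => k c'; rewrite leg12_mxE EmxE.
have [<- | _] := eqVneq c c'; last by rewrite mulr0 eqxx.
case: ((a + b)%N =P k) => [ab_k _ | _]; last by rewrite !mul0r eqxx.
by rewrite !mxE !mxtens_indexK /= -expfzDr // -mulrDl weightD ab_k.
Qed.

Lemma Emx23_intertwines n1 n2 :
  leg12 n2.+1 (Rhat qh n1 1) *m leg13 2 (Rhat qh n1 n2) *m leg23E n1.+1 (Emx q rt n2)
  = leg23E n1.+1 (Emx q rt n2) *m Rhat qh n1 n2.+1.
Proof.
rewrite !Rhat_diag leg12_diag_mx leg13_diag_mx mulmx_diag.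
apply: diag_mx_intertwine => u v.
case: (mxtens_indexP u) => ab c; case: (mxtens_indexP ab) => a s.
case: (mxtens_indexP v) => a' k; rewrite leg23E_mxE EmxE.
have [<- | _] := eqVneq a a'; last by rewrite mul0r eqxx.
case: ((s + c)%N =P k) => [sc_k _ | _]; last by rewrite !mul0r mulr0 eqxx.
by rewrite !mxE !mxtens_indexK /= -expfzDr // -mulrDr weightD sc_k.
Qed.

Section FirstFactor.
Variables n1 n2 : nat.
Hypothesis FE : Fmx q rt n1 *m Emx q rt n1 = 1%:M.

Lemma Rhat_fuse1_13_23 :
  Rhat qh n1.+1 n2 = leg12 n2.+1 (Fmx q rt n1) *m leg13 n1.+1 (Rhat qh 1 n2)
                     *m leg23 2 (Rhat qh n1 n2) *m leg12 n2.+1 (Emx q rt n1).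
Proof.
rewrite -(mulmxA _ (leg13 _ _)).
by rewrite (mulmx_linv_intertwine (leg12_linv _ FE) (Emx12_intertwines n1 n2)).
Qed.

Lemma Rhat_fuse1_23_13 :
  Rhat qh n1.+1 n2 = leg12 n2.+1 (Fmx q rt n1) *m leg23 2 (Rhat qh n1 n2)
                     *m leg13 n1.+1 (Rhat qh 1 n2) *m leg12 n2.+1 (Emx q rt n1).
Proof.
have comm : leg23 2 (Rhat qh n1 n2) *m leg13 n1.+1 (Rhat qh 1 n2)
            = leg13 n1.+1 (Rhat qh 1 n2) *m leg23 2 (Rhat qh n1 n2).
  by rewrite !Rhat_diag leg23_diag_mx leg13_diag_mx diag_mxC.
by rewrite -(mulmxA _ (leg23 _ _)) comm mulmxA -Rhat_fuse1_13_23.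
Qed.

End FirstFactor.

Section SecondFactor.
Variables n1 n2 : nat.
Hypothesis FE : Fmx q rt n2 *m Emx q rt n2 = 1%:M.

Lemma Rhat_fuse2_12_13 :
  Rhat qh n1 n2.+1 = leg23F n1.+1 (Fmx q rt n2) *m leg12 n2.+1 (Rhat qh n1 1)
                     *m leg13 2 (Rhat qh n1 n2) *m leg23E n1.+1 (Emx q rt n2).
Proof.
rewrite -(mulmxA _ (leg12 _ _)).
by rewrite (mulmx_linv_intertwine (leg23_linv _ FE) (Emx23_intertwines n1 n2)).
Qed.

Lemma Rhat_fuse2_13_12 :
  Rhat qh n1 n2.+1 = leg23F n1.+1 (Fmx q rt n2) *m leg13 2 (Rhat qh n1 n2)
                     *m leg12 n2.+1 (Rhat qh n1 1) *m leg23E n1.+1 (Emx q rt n2).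
Proof.
have comm : leg13 2 (Rhat qh n1 n2) *m leg12 n2.+1 (Rhat qh n1 1)
            = leg12 n2.+1 (Rhat qh n1 1) *m leg13 2 (Rhat qh n1 n2).
  by rewrite !Rhat_diag leg13_diag_mx leg12_diag_mx diag_mxC.
by rewrite -(mulmxA _ (leg13 _ _)) comm mulmxA -Rhat_fuse2_12_13.
Qed.

End SecondFactor.

End Fusion.

End SpinMatrices.

Unset Implicit Arguments.
Set Strict Implicit.

Theorem lemma5p2 (F : fieldType) (q q12 : F) (rt : nat -> F)
  (hchar : [pchar F] =i pred0)
  (hsqrt : forall x : F, exists y : F, y * y = x)
  (hq0 : q != 0)
  (hroot : forall k : nat, (0 < k)%N -> q ^+ k != 1)
  (hq12 : q12 ^+ 2 = q)
  (hrt : forall k : nat, rt k ^+ 2 = qnum q k)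
  (n1 n2 : nat) (hn1 : (0 < n1)%N) (hn2 : (0 < n2)%N) :
  [/\ Rhat q12 n1.+1 n2 =
        leg12 n2.+1 (Fmx q rt n1) *m leg13 n1.+1 (Rhat q12 1 n2)
        *m leg23 2 (Rhat q12 n1 n2) *m leg12 n2.+1 (Emx q rt n1),
      Rhat q12 n1.+1 n2 =
        leg12 n2.+1 (Fmx q rt n1) *m leg23 2 (Rhat q12 n1 n2)
        *m leg13 n1.+1 (Rhat q12 1 n2) *m leg12 n2.+1 (Emx q rt n1),
      Rhat q12 n1 n2.+1 =
        leg23F n1.+1 (Fmx q rt n2) *m leg12 n2.+1 (Rhat q12 n1 1)
        *m leg13 2 (Rhat q12 n1 n2) *m leg23E n1.+1 (Emx q rt n2)
    & Rhat q12 n1 n2.+1 =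
        leg23F n1.+1 (Fmx q rt n2) *m leg13 2 (Rhat q12 n1 n2)
        *m leg12 n2.+1 (Rhat q12 n1 1) *m leg23E n1.+1 (Emx q rt n2)].
Proof.
have q12_neq0 : q12 != 0 by apply: contraNneq hq0 => q12_0; rewrite -hq12 q12_0 expr0n.
have two_neq0 : 2%:R != 0 :> F by rewrite ((pcharf0P F).1 hchar).
have FE n : Fmx q rt n *m Emx q rt n = 1%:M.
  apply: Fmx_mulmx_Emx => // i i_le.
  by apply: qnum_add_neq0 => //; rewrite subnK.
split.
- exact: Rhat_fuse1_13_23.
- exact: Rhat_fuse1_23_13.
- exact: Rhat_fuse2_12_13.
- exact: Rhat_fuse2_13_12.
Qed.
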